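(* Let $k$ be an algebraically closed field of characteristic zero, $n\ge1$, $q\in k$ a primitive $2n$-th root of unity, $a\in k\setminus\{0\}$, and let $H=H_{4n}$ be the Hopf algebra generated by $z,x$ with $z^{2n}=1$, $zx=qxz$, $x^2=0$, $\Delta(z)=z\otimes z+a(1-q^{-2})z^{n+1}x\otimes zx$, $\Delta(x)=x\otimes 1+z^n\otimes x$, $\epsilon(z)=1$, $\epsilon(x)=0$, $S(z)=z^{-1}$, $S(x)=-z^nx$. For $i\in\mathbb Z_{2n}$ let $S_i$ be the $1$-dimensional $H$-module with basis $v_i$, $x\cdot v_i=0$, $z\cdot v_i=q^iv_i$, and let $M_i$ be the $2$-dimensional $H$-module with basis $v_1^i,v_2^i$ on which $x v_1^i=v_2^i$, $xv_2^i=0$, $zv_1^i=q^iv_1^i$, $zv_2^i=q^{i+1}v_2^i$. Then for all $i,j\in\mathbb Z_{2n}$, as $H$-modules (with the tensor product module structure via $\Delta$): (1) $S_i\otimes S_j\cong S_{i+j}$; (2) $S_i\otimes M_j\cong M_{i+j}$; (3) $M_i\otimes M_j\cong M_{i+j}\oplus M_{i+j+1}$, where indices are taken modulo $2n$. *)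

From HB Require Import structures.
From mathcomp Require Import all_boot all_order all_algebra.
From mathcomp Require Import mxtens.
Set Implicit Arguments. Unset Strict Implicit. Unset Printing Implicit Defensive.
Import GRing.Theory Num.Theory.
Local Open Scope ring_scope.

(* A (finite-dimensional) module over H = H_{4n} with underlying space k^d
   (column vectors) is given by the matrices of the actions of the two
   generators z and x (the action of the algebra is then determined). *)
Record Hmod (k : fieldType) (d : nat) := HMod { actz : 'M[k]_d ; actx : 'M[k]_d }.

Definition Smod (k : fieldType) (q : k) (i : nat) : Hmod k 1 :=
  HMod (q ^+ i)%:M 0.

(* M_i : basis v1 (index 0), v2 (index 1); x v1 = v2, x v2 = 0,
   z v1 = q^i v1, z v2 = q^(i+1) v2 *)
Definition Mmod (k : fieldType) (q : k) (i : nat) : Hmod k 2 :=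
  HMod (\matrix_(r < 2, c < 2) (if r == c then q ^+ (i + r) else 0))
       (delta_mx (1 : 'I_2) (0 : 'I_2)).

(* Tensor product via the coproduct
   Delta(z) = z (x) z + a(1-q^{-2}) z^{n+1}x (x) zx,
   Delta(x) = x (x) 1 + z^n (x) x. *)
Definition tensHmod (k : fieldType) (n : nat) (q a : k) d1 d2
  (V : Hmod k d1) (W : Hmod k d2) : Hmod k (d1 * d2) :=
  HMod (actz V *t actz W
        + (a * (1 - q ^- 2)) *: ((actz V ^+ n.+1 *m actx V) *t (actz W *m actx W)))
       (actx V *t (1%:M : 'M_d2) + (actz V ^+ n) *t actx W).

Definition dsumHmod (k : fieldType) d1 d2 (V : Hmod k d1) (W : Hmod k d2)
  : Hmod k (d1 + d2) :=
  HMod (block_mx (actz V) 0 0 (actz W)) (block_mx (actx V) 0 0 (actx W)).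

Definition Hiso (k : fieldType) d1 d2 (V : Hmod k d1) (W : Hmod k d2) : Prop :=
  exists (P : 'M[k]_(d2, d1)) (Q : 'M[k]_(d1, d2)),
    [/\ P *m Q = 1%:M, Q *m P = 1%:M,
        P *m actz V = actz W *m P & P *m actx V = actx W *m P].

From HB Require Import structures.
From mathcomp Require Import all_boot all_order all_algebra.
From mathcomp Require Import mxtens.
From mathcomp Require Import ring.
Import GRing.Theory Num.Theory.
Local Open Scope ring_scope.

(* The correction term a (1 - q^-2) z^(n+1) x (x) z x of Delta(z) vanishes on
   S_i (x) V because x kills S_i, so on S_i (x) M_j the element z acts as on
   M_(i+j) and x as z^n (x) x = q^(i n) x, which is undone by rescaling v_1.
   On M_i (x) M_j, with s = q^(i n), the vector u = v_1 (x) v_1 + a s v_2 (x) v_2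
   is a q^(i+j)-eigenvector of z, and x u = s v_1 (x) v_2 + v_2 (x) v_1 is killed
   by x because q^((i+1) n) = -s; hence u generates a copy of M_(i+j), and
   v_1 (x) v_2 generates a copy of M_(i+j+1). *)

Section PrimitiveRoot.

Context {k : fieldType} {n : nat} {q : k}.
Hypothesis hq : (2 * n).-primitive_root q.

Lemma prim_root_neq0 : q != 0.
Proof. by rewrite (prim_root_eq0 hq) -lt0n (prim_order_gt0 hq). Qed.

Lemma prim_expr_half : q ^+ n = -1.
Proof.
have /(dvdn_prim_root hq) : (2 %| 2 * n)%N by rewrite dvdn_mulr.
rewrite mulKn // => prim2.
have /eqP := prim_expr_order prim2; rewrite sqrf_eq1 => /orP[/eqP q_n1|/eqP //].
by have := prim_order_dvd prim2 1; rewrite expr1 q_n1 eqxx.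
Qed.

Lemma Smod_mod m : Smod q (m %% (2 * n)) = Smod q m.
Proof. by rewrite /Smod (prim_expr_mod hq). Qed.

Lemma Mmod_mod m : Mmod q (m %% (2 * n)) = Mmod q m.
Proof.
rewrite /Mmod; congr HMod; apply/matrixP => r c; rewrite !mxE.
by case: eqP => // _; rewrite !exprD (prim_expr_mod hq).
Qed.

End PrimitiveRoot.

Definition mx_of_rows {R : nmodType} m n (rows : seq (seq R)) : 'M[R]_(m, n) :=
  \matrix_(r, c) nth 0 (nth [::] rows r) c.

Lemma mulmx_of_rowsE {R : pzSemiRingType} m n p (A B : seq (seq R)) r c :
  (mx_of_rows m n A *m mx_of_rows n p B) r c =
  \sum_(j <- iota 0 n) nth 0 (nth [::] A r) j * nth 0 (nth [::] B j) c.
Proof.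
have -> : iota 0 n = index_iota 0 n by rewrite /index_iota subn0.
by rewrite big_mkord mxE; apply: eq_bigr => j _; rewrite !mxE.
Qed.

(* Only for matrices of size at most 4 x 4. *)
Ltac mx_of_rows_expand :=
  apply/matrixP => - [[|[|[|[|?]]]] ?] [[|[|[|[|?]]]] ?]; try (exfalso; done);
  rewrite ?mulmx_of_rowsE ?mxE /= ?big_cons ?big_nil /=.

Ltac mx_of_rows_entrywise :=
  mx_of_rows_expand; rewrite ?(mul0r, mulr0, mul1r, mulr1, add0r, addr0) //.

Lemma mulmx_rows2 (R : pzSemiRingType) (a00 a01 a10 a11 b00 b01 b10 b11 : R) :
  mx_of_rows 2 2 [:: [:: a00; a01]; [:: a10; a11]] *m
  mx_of_rows 2 2 [:: [:: b00; b01]; [:: b10; b11]] =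
  mx_of_rows 2 2
    [:: [:: a00 * b00 + a01 * b10; a00 * b01 + a01 * b11];
        [:: a10 * b00 + a11 * b10; a10 * b01 + a11 * b11]].
Proof. by mx_of_rows_entrywise. Qed.

Lemma tensmx_rows2 (R : pzRingType) (a00 a01 a10 a11 b00 b01 b10 b11 : R) :
  mx_of_rows 2 2 [:: [:: a00; a01]; [:: a10; a11]] *t
  mx_of_rows 2 2 [:: [:: b00; b01]; [:: b10; b11]] =
  mx_of_rows 4 4
    [:: [:: a00 * b00; a00 * b01; a01 * b00; a01 * b01];
        [:: a00 * b10; a00 * b11; a01 * b10; a01 * b11];
        [:: a10 * b00; a10 * b01; a11 * b00; a11 * b01];
        [:: a10 * b10; a10 * b11; a11 * b10; a11 * b11]].
Proof. by mx_of_rows_entrywise. Qed.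

Lemma block_mx_rows2 (R : nmodType) (a00 a01 a10 a11 b00 b01 b10 b11 : R) :
  block_mx (mx_of_rows 2 2 [:: [:: a00; a01]; [:: a10; a11]]) 0 0
           (mx_of_rows 2 2 [:: [:: b00; b01]; [:: b10; b11]]) =
  mx_of_rows 4 4 [:: [:: a00; a01; 0; 0]; [:: a10; a11; 0; 0];
                     [:: 0; 0; b00; b01]; [:: 0; 0; b10; b11]].
Proof.
apply/matrixP => r c; rewrite -[r](@splitK 2 2) -[c](@splitK 2 2).
by case: (split r) => -[[|[|?]] ?] //; case: (split c) => -[[|[|?]] ?] //;
  rewrite ?(block_mxEul, block_mxEur, block_mxEdl, block_mxEdr) !mxE.
Qed.

Lemma scalar_mx_rows2 (R : pzSemiRingType) (c : R) :
  c%:M = mx_of_rows 2 2 [:: [:: c; 0]; [:: 0; c]].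
Proof. by mx_of_rows_entrywise. Qed.

Section ActionMatrices.

Variables (k : fieldType) (n : nat) (q a : k).

Lemma actz_Mmod i :
  actz (Mmod q i) = mx_of_rows 2 2 [:: [:: q ^+ i; 0]; [:: 0; q ^+ i.+1]].
Proof. by mx_of_rows_entrywise; rewrite ?addn0 ?addn1. Qed.

Lemma actx_Mmod i : actx (Mmod q i) = mx_of_rows 2 2 [:: [:: 0; 0]; [:: 1; 0]].
Proof. by mx_of_rows_entrywise. Qed.

Lemma actz_Mmod_exp i m :
  actz (Mmod q i) ^+ m =
  mx_of_rows 2 2 [:: [:: q ^+ (i * m); 0]; [:: 0; q ^+ (i.+1 * m)]].
Proof.
elim: m => [|m IHm]; first by rewrite expr0 !muln0; mx_of_rows_entrywise.
rewrite exprSr -mulmxE IHm actz_Mmod mulmx_rows2 !mulr0 !mul0r !addr0 add0r.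
by rewrite -!exprD -!mulnSr.
Qed.

Lemma tens_Smod i j : tensHmod n q a (Smod q i) (Smod q j) = Smod q (i + j).
Proof.
rewrite /tensHmod /Smod /= !mulmx0 !tensmx0 tens0mx scaler0 !addr0.
by rewrite tens_scalar_mx castmx_id scale_scalar_mx exprD.
Qed.

Lemma tens_Smod_Mmod i j :
  tensHmod n q a (Smod q i) (Mmod q j) =
  HMod (actz (Mmod q (i + j))) (q ^+ (i * n) *: actx (Mmod q (i + j))).
Proof.
rewrite /tensHmod /Smod; cbn [actz actx].
rewrite mulmx0 !tens0mx scaler0 addr0 add0r -(rmorphXn (@scalar_mx k 1)).
rewrite !tens_scalar_mx !castmx_id -exprM !actz_Mmod !actx_Mmod; congr HMod.
by mx_of_rows_entrywise; rewrite -exprD ?addnS.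
Qed.

Lemma actz_tens_Mmod i j :
  actz (tensHmod n q a (Mmod q i) (Mmod q j)) =
  mx_of_rows 4 4
    [:: [:: q ^+ (i + j); 0; 0; 0];
        [:: 0; q ^+ (i + j).+1; 0; 0];
        [:: 0; 0; q ^+ (i + j).+1; 0];
        [:: a * (1 - q ^- 2) * q ^+ (i.+1 * n.+1) * q ^+ j.+1; 0; 0;
            q ^+ (i + j).+2]].
Proof.
rewrite /tensHmod; cbn [actz].
rewrite actz_Mmod_exp !actz_Mmod !actx_Mmod !mulmx_rows2 !tensmx_rows2.
by mx_of_rows_entrywise; rewrite ?mulrA -?exprD ?addnS ?addSn.
Qed.

Lemma actx_tens_Mmod i j :
  actx (tensHmod n q a (Mmod q i) (Mmod q j)) =
  mx_of_rows 4 4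
    [:: [:: 0; 0; 0; 0];
        [:: q ^+ (i * n); 0; 0; 0];
        [:: 1; 0; 0; 0];
        [:: 0; 1; q ^+ (i.+1 * n); 0]].
Proof.
rewrite /tensHmod; cbn [actx].
rewrite actz_Mmod_exp actx_Mmod scalar_mx_rows2 !tensmx_rows2.
by mx_of_rows_entrywise.
Qed.

Lemma actz_dsum_Mmod u v :
  actz (dsumHmod (Mmod q u) (Mmod q v)) =
  mx_of_rows 4 4
    [:: [:: q ^+ u; 0; 0; 0];
        [:: 0; q ^+ u.+1; 0; 0];
        [:: 0; 0; q ^+ v; 0];
        [:: 0; 0; 0; q ^+ v.+1]].
Proof. by rewrite /dsumHmod; cbn [actz]; rewrite !actz_Mmod block_mx_rows2. Qed.

Lemma actx_dsum_Mmod u v :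
  actx (dsumHmod (Mmod q u) (Mmod q v)) =
  mx_of_rows 4 4
    [:: [:: 0; 0; 0; 0];
        [:: 1; 0; 0; 0];
        [:: 0; 0; 0; 0];
        [:: 0; 0; 1; 0]].
Proof. by rewrite /dsumHmod; cbn [actx]; rewrite !actx_Mmod block_mx_rows2. Qed.

End ActionMatrices.

Lemma Hiso_refl (k : fieldType) d (V : Hmod k d) : Hiso V V.
Proof. by exists 1%:M, 1%:M; rewrite !(mulmx1, mul1mx). Qed.

Lemma Mmod_scale_actx_iso (k : fieldType) (q c : k) m : c != 0 ->
  Hiso (HMod (actz (Mmod q m)) (c *: actx (Mmod q m))) (Mmod q m).
Proof.
move=> c_neq0; exists (mx_of_rows 2 2 [:: [:: c; 0]; [:: 0; 1]]).
exists (mx_of_rows 2 2 [:: [:: c^-1; 0]; [:: 0; 1]]).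
have -> : c *: actx (Mmod q m) = mx_of_rows 2 2 [:: [:: 0; 0]; [:: c; 0]].
  by rewrite actx_Mmod; mx_of_rows_entrywise.
rewrite actz_Mmod actx_Mmod.
by split; mx_of_rows_entrywise; rewrite ?divff ?mulVf // mulrC.
Qed.

Section TensorSquare.

Context {k : fieldType} {n : nat} {q a : k}.
Hypotheses (q_neq0 : q != 0) (qn_eqN1 : q ^+ n = -1).

Lemma tens_Mmod_iso i j :
  Hiso (tensHmod n q a (Mmod q i) (Mmod q j))
       (dsumHmod (Mmod q (i + j)) (Mmod q (i + j).+1)).
Proof.
have exp_Si_n : q ^+ (i.+1 * n) = - q ^+ (i * n).
  by rewrite mulSn exprD qn_eqN1 mulN1r.
have exp_Si_Sn : q ^+ (i.+1 * n.+1) = - q ^+ (i * n) * q ^+ i.+1.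
  by rewrite mulnS exprD exp_Si_n mulrC.
rewrite /Hiso actz_tens_Mmod actx_tens_Mmod actz_dsum_Mmod actx_dsum_Mmod.
rewrite exp_Si_n exp_Si_Sn; set s := q ^+ (i * n); clearbody s.
(* The columns of the second matrix are u, x u, v_1 (x) v_2 and v_2 (x) v_2,
   written in the basis v_1 (x) v_1, v_1 (x) v_2, v_2 (x) v_1, v_2 (x) v_2. *)
exists (mx_of_rows 4 4
  [:: [:: 1; 0; 0; 0]; [:: 0; 0; 1; 0]; [:: 0; 1; - s; 0]; [:: - (a * s); 0; 0; 1]]).
exists (mx_of_rows 4 4
  [:: [:: 1; 0; 0; 0]; [:: 0; s; 1; 0]; [:: 0; 1; 0; 0]; [:: a * s; 0; 0; 1]]).
split; mx_of_rows_expand; try ring.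
by rewrite !exprS exprD; field.
Qed.

End TensorSquare.

Theorem theorem2p1 (k : closedFieldType) (hchar : [pchar k] =i pred0)
  (n : nat) (hn : (1 <= n)%N) (q : k) (hq : (2 * n).-primitive_root q)
  (a : k) (ha : a != 0) (i j : 'I_(2 * n)) :
  [/\ Hiso (tensHmod n q a (Smod q i) (Smod q j)) (Smod q ((i + j) %% (2 * n))),
      Hiso (tensHmod n q a (Smod q i) (Mmod q j)) (Mmod q ((i + j) %% (2 * n)))
    & Hiso (tensHmod n q a (Mmod q i) (Mmod q j))
           (dsumHmod (Mmod q ((i + j) %% (2 * n))) (Mmod q ((i + j).+1 %% (2 * n))))].
Proof.
have q_neq0 := prim_root_neq0 hq.
rewrite !(Mmod_mod hq) !(Smod_mod hq); split.
- by rewrite tens_Smod; apply: Hiso_refl.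
- by rewrite tens_Smod_Mmod; apply: Mmod_scale_actx_iso; rewrite expf_neq0.
- by apply: tens_Mmod_iso; last exact: prim_expr_half hq.
Qed.
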